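(* For a nonzero $\vec v\in\mathbb{C}^3$, let $I_{\langle\vec v\rangle}\in SU(3)$ be the unique element having $\langle\vec v\rangle$ as its $+1$-eigenspace and the Hermitian orthogonal complement $\langle\vec v\rangle^\perp$ as its $-1$-eigenspace (the geodesic inversion of $\mathbb{C}P(2)$ at $\langle\vec v\rangle$). For nonzero $\vec v,\vec w\in\mathbb{C}^3$, the composition $I_{\langle\vec v\rangle}I_{\langle\vec w\rangle}$ is a geodesic inversion (i.e. equals $I_{\langle\vec u\rangle}$ for some nonzero $\vec u$) if and only if $\vec v$ and $\vec w$ are Hermitian orthogonal.
   Context: The geodesic inversions are exactly the elements of $SU(3)$ of trace $-1$. *)

From HB Require Import structures.
From mathcomp Require Import all_boot all_order all_algebra.
From mathcomp Require Import complex.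
From mathcomp Require Import reals.
Set Implicit Arguments. Unset Strict Implicit. Unset Printing Implicit Defensive.
Import Order.TTheory GRing.Theory Num.Theory.
Local Open Scope ring_scope.

Definition hdot (C : numClosedFieldType) (x y : 'cV[C]_3) : C :=
  \sum_(i < 3) x i 0 * (y i 0)^*.

Definition horth (C : numClosedFieldType) (x y : 'cV[C]_3) : Prop := hdot x y = 0.

Definition adjmx (C : numClosedFieldType) (M : 'M[C]_3) : 'M[C]_3 :=
  (map_mx Num.conj M)^T.

Definition in_SU3 (C : numClosedFieldType) (M : 'M[C]_3) : Prop :=
  M *m adjmx M = 1%:M /\ \det M = 1.

Definition geod_inv_at (C : numClosedFieldType) (v : 'cV[C]_3) (M : 'M[C]_3) : Prop :=
  in_SU3 M /\
  (forall x : 'cV[C]_3, M *m x = x <-> exists c : C, x = c *: v) /\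
  (forall x : 'cV[C]_3, M *m x = - x <-> horth x v).

From mathcomp Require Import all_boot all_order all_algebra.
From mathcomp Require Import complex reals ring.
Set Implicit Arguments. Unset Strict Implicit. Unset Printing Implicit Defensive.
Import Order.TTheory GRing.Theory Num.Theory.
Local Open Scope ring_scope.
Local Open Scope sesquilinear_scope.

(* A geodesic inversion is I_v = 2 P_v - 1, with P_v the Hermitian projection
   onto <v>.  Hence tr I_u = -1, while tr (I_v I_w) = 4 |<v,w>|^2 / (|v|^2 |w|^2) - 1,
   so I_v I_w can only be an inversion when <v,w> = 0.  Conversely, if v and w are
   orthogonal, then P_v P_w = 0 and P_v + P_w + P_u = 1 for the (conjugated) cross
   product u of v and w, so I_v I_w = 1 - 2 P_v - 2 P_w = 2 P_u - 1 = I_u. *)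

Lemma mulmx_cV_ext (R : pzRingType) m n (A B : 'M[R]_(m, n)) :
  (forall x : 'cV_n, A *m x = B *m x) -> A = B.
Proof.
move=> AB; apply/matrixP => i j.
by move/colP: (AB (delta_mx j 0)) => /(_ i); rewrite -!colE !mxE.
Qed.

Section GeodesicInversion.
Variable C : numClosedFieldType.
Implicit Types (x y u v w : 'cV[C]_3) (M : 'M[C]_3).

Lemma hdotE x y : hdot x y = (y ^t* *m x) 0 0.
Proof. by rewrite /hdot !mxE; apply: eq_bigr => i _; rewrite !mxE mulrC. Qed.

Lemma hdotC x y : hdot y x = (hdot x y)^*.
Proof.
rewrite /hdot rmorph_sum; apply: eq_bigr => i _.
by rewrite rmorphM /= conjCK mulrC.
Qed.

Lemma hdotZl a x y : hdot (a *: x) y = a * hdot x y.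
Proof. by rewrite !hdotE -scalemxAr mxE. Qed.

Lemma hdotBl x y z : hdot (x - y) z = hdot x z - hdot y z.
Proof. by rewrite !hdotE mulmxBr !mxE. Qed.

Lemma hdot_self_eq0 v : (hdot v v == 0) = (v == 0).
Proof.
have -> : hdot v v = \sum_(i < 3) `|v i 0| ^+ 2.
  by apply: eq_bigr => i _; rewrite normCK.
rewrite psumr_eq0 => [|i _]; last exact: exprn_ge0.
apply/allP/eqP => [v0 | -> i _]; last by rewrite mxE normr0 expr0n eqxx.
apply/matrixP => i j; rewrite (ord1 j) mxE.
by apply/eqP; rewrite -normr_eq0 -sqrf_eq0 (implyP (v0 i _)) ?mem_index_enum.
Qed.

Definition hproj v : 'M[C]_3 := (hdot v v)^-1 *: (v *m v ^t*).

Definition geod_inv_mx v : 'M[C]_3 := 2 *: hproj v - 1%:M.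

Lemma hprojE v x : hproj v *m x = (hdot x v / hdot v v) *: v.
Proof.
rewrite -scalemxAl -mulmxA [_ *m x]mx11_scalar -hdotE mul_mx_scalar.
by rewrite scalerA mulrC.
Qed.

Lemma hdot_hproj v x : v != 0 -> hdot (hproj v *m x) v = hdot x v.
Proof. by rewrite -hdot_self_eq0 => vv0; rewrite hprojE hdotZl mulfVK. Qed.

Lemma geod_inv_mxE v x : geod_inv_mx v *m x = 2 *: (hproj v *m x) - x.
Proof. by rewrite mulmxBl mul1mx -scalemxAl. Qed.

Lemma geod_inv_atP v M : v != 0 ->
  geod_inv_at v M <-> in_SU3 M /\ M = geod_inv_mx v.
Proof.
move=> v0; have vv0 : hdot v v != 0 by rewrite hdot_self_eq0.
have two0 : (2 : C) != 0 by rewrite pnatr_eq0.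
split=> [[SU [fixM antiM]] | [SU eM]]; split=> //.
  apply: mulmx_cV_ext => x; set p := hproj v *m x.
  have Mp : M *m p = p by apply/fixM; exists (hdot x v / hdot v v); rewrite /p hprojE.
  have Mq : M *m (x - p) = - (x - p).
    by apply/antiM; rewrite /horth hdotBl hdot_hproj // subrr.
  rewrite geod_inv_mxE -/p -{1}(subrK p x) mulmxDr Mq Mp.
  by rewrite opprB scaler_nat mulr2n addrAC.
subst M; split=> x; rewrite geod_inv_mxE hprojE.
  split=> [|[c ->]]; last by rewrite hdotZl mulfK // scaler_nat mulr2n addrK.
  move/eqP; rewrite subr_eq -mulr2n -scaler_nat => /eqP /(scalerI two0) <-.
  by eexists.
rewrite /horth; split=> [/eqP | xv0]; last by rewrite xv0 mul0r scale0r scaler0 add0r.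
rewrite subr_eq addNr scaler_eq0 (negbTE two0) scaler_eq0 (negbTE v0) orbF /=.
by rewrite mulf_eq0 invr_eq0 (negbTE vv0) orbF => /eqP.
Qed.

Lemma in_SU3M (A B : 'M[C]_3) : in_SU3 A -> in_SU3 B -> in_SU3 (A *m B).
Proof.
have adjE (M : 'M[C]_3) : adjmx M = M ^t* by rewrite /adjmx map_trmx.
rewrite /in_SU3 !adjE => -[/unitarymxP UA dA] [/unitarymxP UB dB].
by split; [apply/unitarymxP/mul_unitarymx | rewrite det_mulmx dA dB mulr1].
Qed.

Lemma mxtrace_outer x y : \tr (x *m y ^t*) = hdot x y.
Proof. by rewrite mxtrace_mulC hdotE /mxtrace big_ord1. Qed.

Lemma hprojM v w :
  hproj v *m hproj w = (hdot w v / (hdot v v * hdot w w)) *: (v *m w ^t*).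
Proof.
rewrite {2}/hproj -scalemxAr mulmxA hprojE -scalemxAl scalerA.
by congr (_ *: _); rewrite invfM; ring.
Qed.

Lemma mxtrace_hproj v : v != 0 -> \tr (hproj v) = 1.
Proof. by rewrite -hdot_self_eq0 => v0; rewrite mxtraceZ mxtrace_outer mulVf. Qed.

Lemma mxtrace_hprojM v w :
  \tr (hproj v *m hproj w) = `|hdot v w| ^+ 2 / (hdot v v * hdot w w).
Proof. by rewrite hprojM mxtraceZ mxtrace_outer normCK -hdotC; ring. Qed.

Lemma geod_inv_mxM v w : geod_inv_mx v *m geod_inv_mx w =
  4 *: (hproj v *m hproj w) - 2 *: (hproj v + hproj w) + 1%:M.
Proof.
rewrite /geod_inv_mx mulmxBl !mulmxBr !mulmx1 mul1mx -scalemxAl -scalemxAr scalerA.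
have -> : (4 : C) = 2 * 2 by ring.
by rewrite opprB scalerDr opprD !addrA addrAC.
Qed.

Lemma mxtrace_geod_inv v : v != 0 -> \tr (geod_inv_mx v) = -1.
Proof.
move=> v0; rewrite /geod_inv_mx raddfB /= mxtraceZ mxtrace_hproj //.
by rewrite mxtrace1; ring.
Qed.

Lemma mxtrace_geod_invM v w : v != 0 -> w != 0 ->
  \tr (geod_inv_mx v *m geod_inv_mx w) =
  4 * `|hdot v w| ^+ 2 / (hdot v v * hdot w w) - 1.
Proof.
move=> v0 w0; rewrite geod_inv_mxM raddfD raddfB /= !mxtraceZ mxtraceD.
by rewrite mxtrace_hprojM !mxtrace_hproj // mxtrace1; ring.
Qed.

Lemma geod_inv_mxM_orth u v w : u != 0 -> v != 0 -> w != 0 ->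
  geod_inv_mx v *m geod_inv_mx w = geod_inv_mx u -> hdot v w = 0.
Proof.
move=> u0 v0 w0 /(congr1 mxtrace)/eqP.
rewrite mxtrace_geod_invM // mxtrace_geod_inv // subr_eq addNr.
rewrite !mulf_eq0 invr_eq0 !mulf_eq0 !hdot_self_eq0 (negbTE v0) (negbTE w0) pnatr_eq0 /=.
by rewrite orbF orbb normr_eq0 => /eqP.
Qed.

Local Notation i0 := (@Ordinal 3 0 isT).
Local Notation i1 := (@Ordinal 3 1 isT).
Local Notation i2 := (@Ordinal 3 2 isT).

Lemma ord3P (P : 'I_3 -> Prop) : P i0 -> P i1 -> P i2 -> forall k, P k.
Proof. by move=> P0 P1 P2 [[|[|[|//]]] lt_k3]; rewrite (bool_irrelevance lt_k3 isT). Qed.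

Lemma hdot3E x y :
  hdot x y = x i0 0 * (y i0 0)^* + x i1 0 * (y i1 0)^* + x i2 0 * (y i2 0)^*.
Proof.
rewrite /hdot !big_ord_recl big_ord0 addr0 addrA.
have -> : ord0 = i0 by apply: val_inj.
have -> : lift i0 ord0 = i1 by apply: val_inj.
by have -> : lift i0 (lift ord0 ord0) = i2 by apply: val_inj.
Qed.

(* The conjugate makes [hcross v w] Hermitian-orthogonal to both [v] and [w]. *)
Definition hcross v w : 'cV[C]_3 := \col_k
  (match val k with
   | 0 => v i1 0 * w i2 0 - v i2 0 * w i1 0
   | 1 => v i2 0 * w i0 0 - v i0 0 * w i2 0
   | _ => v i0 0 * w i1 0 - v i1 0 * w i0 0
   end)^*.

Lemma hdot_hcross v w : hdot (hcross v w) (hcross v w) =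
  hdot v v * hdot w w - hdot v w * hdot w v.
Proof. by rewrite !hdot3E !mxE /= !(conjCK, rmorphB, rmorphM) /=; ring. Qed.

Lemma hcross_decomp v w x (u := hcross v w) : hdot u u *: x =
    (hdot w w * hdot x v - hdot w v * hdot x w) *: v
  + (hdot v v * hdot x w - hdot v w * hdot x v) *: w + hdot x u *: u.
Proof.
apply/colP; elim/ord3P.
all: by rewrite /u !mxE !hdot3E !mxE /= !(conjCK, rmorphB, rmorphM) /=; ring.
Qed.

Section Orthogonal.
Variables v w : 'cV[C]_3.
Hypotheses (v0 : v != 0) (w0 : w != 0) (vw : hdot v w = 0).

Let wv : hdot w v = 0. Proof. by rewrite hdotC vw conjC0. Qed.

Lemma hdot_hcross_orth : hdot (hcross v w) (hcross v w) = hdot v v * hdot w w.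
Proof. by rewrite hdot_hcross vw mul0r subr0. Qed.

Lemma hcross_orth_neq0 : hcross v w != 0.
Proof. by rewrite -hdot_self_eq0 hdot_hcross_orth mulf_neq0 ?hdot_self_eq0. Qed.

Lemma hproj_hcross_sum : hproj v + hproj w + hproj (hcross v w) = 1%:M.
Proof.
have vv0 : hdot v v != 0 by rewrite hdot_self_eq0.
have ww0 : hdot w w != 0 by rewrite hdot_self_eq0.
have uu0 : hdot (hcross v w) (hcross v w) != 0.
  by rewrite hdot_self_eq0 hcross_orth_neq0.
apply: mulmx_cV_ext => x; rewrite mul1mx !mulmxDl !hprojE; apply: (scalerI uu0).
rewrite /= [RHS]hcross_decomp vw wv !scalerDr !scalerA hdot_hcross_orth !mul0r !subr0.
by congr (_ *: _ + _ *: _ + _ *: _); field; rewrite ?vv0 ?ww0.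
Qed.

Lemma geod_inv_mxM_hcross :
  geod_inv_mx v *m geod_inv_mx w = geod_inv_mx (hcross v w).
Proof.
rewrite geod_inv_mxM hprojM wv mul0r scale0r scaler0 add0r.
have -> : hproj v + hproj w = 1%:M - hproj (hcross v w).
  by rewrite -hproj_hcross_sum addrK.
rewrite /geod_inv_mx scalerBr opprB -addrA; congr (_ + _).
by rewrite scaler_nat mulr2n opprD subrK.
Qed.

End Orthogonal.

End GeodesicInversion.

Theorem lemma2p4 (R : realType) (v w : 'cV[R[i]]_3) (Iv Iw : 'M[R[i]]_3) :
  v != 0 -> w != 0 ->
  geod_inv_at v Iv -> geod_inv_at w Iw ->
  ((exists u : 'cV[R[i]]_3, u != 0 /\ geod_inv_at u (Iv *m Iw)) <-> horth v w).
Proof.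
move=> v0 w0 /(geod_inv_atP _ v0) [SUv ?] /(geod_inv_atP _ w0) [SUw ?]; subst Iv Iw.
split=> [[u [u0 /(geod_inv_atP _ u0) [_]]] | vw]; first exact: geod_inv_mxM_orth.
have u0 := hcross_orth_neq0 v0 w0 vw.
exists (hcross v w); split=> //; apply/geod_inv_atP => //.
by rewrite -geod_inv_mxM_hcross //; split=> //; apply: in_SU3M.
Qed.
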